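(* Let $V=[n]$, $r\ge0$, and $A,B\subseteq V$. Then $A$ and $B$ are $r$-orthogonal if and only if $$\big(|A\cap B|<r \ \vee\ A\subseteq B\ \vee\ B\subseteq A\ \vee\ |\overline{A\cup B}|<r\ \vee\ |A\cap B|=|\overline{A\cup B}|=r\big)$$ and $$\big(|A\setminus B|<r\ \vee\ A\cap B=\emptyset\ \vee\ \overline{A\cup B}=\emptyset\ \vee\ |B\setminus A|<r\ \vee\ |A\setminus B|=|B\setminus A|=r\big).$$
   Context: $\overline X=V\setminus X$. Hypergraphs on $V$ are identified with their hyperedge sets. $\mathcal K_r(n)$ is the class of hypergraphs $\mathcal E$ on $V$ satisfying: (R0) every $X\subseteq V$ with $|X|\le r$ is in $\mathcal E$; (R1) $A\in\mathcal E\Rightarrow V\setminus A\in\mathcal E$; (R2) $A,B\in\mathcal E$ and $|A\cap B|\ge r\Rightarrow A\cup B\in\mathcal E$. $\mathcal K^0_r(n)$ is the class satisfying (R0) and (R1) only. $\mathrm{cl}_r(H)$ (resp. $\mathrm{cl}^0_r(H)$) is the intersection of all hypergraphs in $\mathcal K_r(n)$ (resp. $\mathcal K^0_r(n)$) containing $H$. $A,B$ are $r$-orthogonal if $\mathrm{cl}_r(\{A,B\})=\mathrm{cl}^0_r(\{A,B\})$, where $\{A,B\}$ is the hypergraph with hyperedges $A,B$. *)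

From mathcomp Require Import all_boot.
Set Implicit Arguments. Unset Strict Implicit. Unset Printing Implicit Defensive.

(* Ground set V = [n] is represented by 'I_n; complement is ~: X.
   Hypergraphs on V are sets of hyperedges: {set {set 'I_n}}. *)

Definition R0 (n r : nat) (E : {set {set 'I_n}}) : bool :=
  [forall X : {set 'I_n}, (#|X| <= r) ==> (X \in E)].
Definition R1 (n : nat) (E : {set {set 'I_n}}) : bool :=
  [forall A : {set 'I_n}, (A \in E) ==> (~: A \in E)].
Definition R2 (n r : nat) (E : {set {set 'I_n}}) : bool :=
  [forall A : {set 'I_n}, forall B : {set 'I_n},
     [&& A \in E, B \in E & r <= #|A :&: B|] ==> (A :|: B \in E)].

Definition inK (n r : nat) (E : {set {set 'I_n}}) : bool :=
  [&& R0 r E, R1 E & R2 r E].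
Definition inK0 (n r : nat) (E : {set {set 'I_n}}) : bool :=
  R0 r E && R1 E.

Definition cl (n r : nat) (H : {set {set 'I_n}}) : {set {set 'I_n}} :=
  [set X | [forall E : {set {set 'I_n}}, (inK r E && (H \subset E)) ==> (X \in E)]].
Definition cl0 (n r : nat) (H : {set {set 'I_n}}) : {set {set 'I_n}} :=
  [set X | [forall E : {set {set 'I_n}}, (inK0 r E && (H \subset E)) ==> (X \in E)]].

Definition r_orthogonal (n r : nat) (A B : {set 'I_n}) : Prop :=
  cl r [set A; B] = cl0 r [set A; B].

From mathcomp Require Import all_boot zify.
Set Implicit Arguments. Unset Strict Implicit. Unset Printing Implicit Defensive.

(* cl^0_r {A, B} consists of the sets of size at most r, their complements,
   and A, ~A, B, ~B; hence A and B are r-orthogonal iff this family already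
   satisfies (R2).  Small and co-small sets never violate (R2), and the union of
   X, Y meeting in at least r points lies in the family iff one contains the
   other or the union is co-small.  Checking this for the pairs (A, B) and
   (~A, ~B) gives the first condition, for (A, ~B) and (~A, B) the second. *)

Section OrthogonalityCondition.

Variables (T : finType) (r : nat).
Implicit Types A B X Y : {set T}.

Lemma setC_eq X Y : (~: X == Y) = (X == ~: Y).
Proof. by rewrite -(inj_eq (@setC_inj _)) setCK. Qed.

Definition orth_cond X Y : Prop :=
  #|X :&: Y| < r \/ X \subset Y \/ Y \subset X \/ #|~: (X :|: Y)| < r
  \/ (#|X :&: Y| = r /\ #|~: (X :|: Y)| = r).

Lemma orth_condE X Y :
  orth_cond X Y <->
  (r <= #|X :&: Y| -> [|| X \subset Y, Y \subset X | #|~: (X :|: Y)| <= r]) /\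
  (r <= #|~: (X :|: Y)| -> [|| X \subset Y, Y \subset X | #|X :&: Y| <= r]).
Proof. by rewrite /orth_cond; case: (X \subset Y); case: (Y \subset X) => /=; lia. Qed.

Lemma orth_condC X Y : orth_cond X Y -> orth_cond Y X.
Proof. by rewrite /orth_cond setIC setUC; tauto. Qed.

Lemma orth_condCC X Y : orth_cond X Y -> orth_cond (~: X) (~: Y).
Proof. by rewrite /orth_cond -setCU -setCI setCK !setCS; tauto. Qed.

Lemma orth_cond_signed A B X Y : orth_cond A B -> orth_cond A (~: B) ->
  (X \in [set A; B]) || (~: X \in [set A; B]) ->
  (Y \in [set A; B]) || (~: Y \in [set A; B]) ->
  [\/ X = Y, X = ~: Y | orth_cond X Y].
Proof.
move=> oAB oAB'.
have oBA := orth_condC oAB; have oCACB := orth_condCC oAB.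
have oCBCA := orth_condC oCACB; have oCBA := orth_condC oAB'.
have := orth_condCC oAB'; rewrite setCK => oCAB; have oBCA := orth_condC oCAB.
have signed Z : (Z \in [set A; B]) || (~: Z \in [set A; B]) ->
    [|| Z == A, Z == ~: A, Z == B | Z == ~: B].
  by rewrite !inE !setC_eq; case/orP => /orP[]->; rewrite ?orbT.
by move=> /signed/or4P[]/eqP-> /signed/or4P[]/eqP->;
  by [constructor 1 | constructor 2; rewrite ?setCK | constructor 3].
Qed.

End OrthogonalityCondition.

Section ExplicitClosure.

Variables (T : finType) (r : nat).
Implicit Types (H : {set {set T}}) (A B X Y : {set T}).

Definition cl0_explicit H : {set {set T}} :=
  [set X : {set T} | [|| #|X| <= r, #|~: X| <= r, X \in H | ~: X \in H]].

Lemma cl0_explicitC H X : (~: X \in cl0_explicit H) = (X \in cl0_explicit H).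
Proof. by rewrite !inE setCK orbCA [(~: X \in H) || _]orbC. Qed.

Lemma cl0_explicit_pairCr A B : cl0_explicit [set A; ~: B] = cl0_explicit [set A; B].
Proof.
apply/setP => X; rewrite !inE (inj_eq (@setC_inj _)) !setC_eq.
by case: (X == A); case: (X == B); case: (X == ~: A); case: (X == ~: B); rewrite ?orbT ?orbF.
Qed.

Lemma cl0_explicit_pairCC A B :
  cl0_explicit [set ~: A; ~: B] = cl0_explicit [set A; B].
Proof. by rewrite cl0_explicit_pairCr setUC cl0_explicit_pairCr setUC. Qed.

Lemma sub_cl0_explicit H : H \subset cl0_explicit H.
Proof. by apply/subsetP => X XH; rewrite inE XH !orbT. Qed.

Lemma subset_of_card_setI A B : #|A| <= r -> r <= #|A :&: B| -> A \subset B.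
Proof.
move=> A_r rAB; apply/setIidPl/eqP.
by rewrite eqEcard subsetIl (leq_trans A_r rAB).
Qed.

Lemma mem_cl0_explicit_setU H X Y :
  X \in cl0_explicit H -> Y \in cl0_explicit H ->
  [|| X \subset Y, Y \subset X | #|~: (X :|: Y)| <= r] -> X :|: Y \in cl0_explicit H.
Proof.
move=> XH YH /or3P[/setUidPr -> // | /setUidPl -> // | CXY_r].
by rewrite inE CXY_r orbT.
Qed.

Lemma setU_mem_cl0_explicit_pair X Y : r <= #|X :&: Y| ->
  X :|: Y \in cl0_explicit [set X; Y] ->
  [|| X \subset Y, Y \subset X | #|~: (X :|: Y)| <= r].
Proof.
have C_sub (U V : {set T}) : ~: (U :|: V) = U -> U \subset V.
  move=> e; have /subsetP sUCU : U \subset ~: U by rewrite -{1}e setCS subsetUl.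
  by apply/subsetP => x xU; move: (sUCU x xU); rewrite inE xU.
move=> rXY; rewrite !inE => /or4P[XY_r | CXY_r | | ].
- by rewrite (subset_of_card_setI _ rXY) // (leq_trans _ XY_r) // subset_leq_card ?subsetUl.
- by apply/or3P; constructor 3.
- by case/orP=> [/eqP/setUidPl -> | /eqP/setUidPr ->]; rewrite ?orbT.
- case/orP=> /eqP e; first by rewrite (C_sub _ _ e).
  by rewrite setUC in e; rewrite (C_sub _ _ e) orbT.
Qed.

End ExplicitClosure.

Section Closures.

Variables (n r : nat).
Implicit Types (H E : {set {set 'I_n}}) (A B X Y : {set 'I_n}).

Lemma R2P E :
  reflect (forall X Y, X \in E -> Y \in E -> r <= #|X :&: Y| -> X :|: Y \in E)
          (R2 r E).
Proof.
apply: (iffP forallP) => [R2E X Y XE YE rXY | R2E X].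
  by have /forallP/(_ Y) := R2E X; rewrite XE YE rXY.
by apply/forallP => Y; apply/implyP => /and3P[]; apply: R2E.
Qed.

Lemma cl_sub H E : inK r E -> H \subset E -> cl r H \subset E.
Proof.
by move=> KE HE; apply/subsetP => X; rewrite inE => /forallP/(_ E); rewrite KE HE.
Qed.

Lemma cl0_sub H E : inK0 r E -> H \subset E -> cl0 r H \subset E.
Proof.
by move=> KE HE; apply/subsetP => X; rewrite inE => /forallP/(_ E); rewrite KE HE.
Qed.

Lemma cl0_sub_cl H : cl0 r H \subset cl r H.
Proof.
apply/subsetP => X; rewrite !inE => /forallP X_K0; apply/forallP => E.
apply/implyP => /andP[/and3P[R0E R1E _] HE].
by apply: (implyP (X_K0 E)); rewrite /inK0 R0E R1E HE.
Qed.

Lemma R2_cl H : R2 r (cl r H).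
Proof.
apply/R2P => X Y; rewrite !inE => /forallP XE /forallP YE rXY.
apply/forallP => E; apply/implyP => /[dup] /andP[/and3P[_ _ /R2P R2E] _] KE.
by apply: R2E; rewrite ?(implyP (XE E)) ?(implyP (YE E)).
Qed.

Lemma inK0_cl0_explicit H : inK0 r (cl0_explicit r H).
Proof.
apply/andP; split; apply/forallP => X; apply/implyP; last by rewrite cl0_explicitC.
by rewrite inE => ->.
Qed.

Lemma cl0_explicit_sub H E : inK0 r E -> H \subset E -> cl0_explicit r H \subset E.
Proof.
case/andP=> /forallP R0E /forallP R1E /subsetP HE.
have CE X : X \in E -> ~: X \in E by apply/implyP.
apply/subsetP => X; rewrite inE => /or4P[X_r | CX_r | /HE // | /HE/CE].
- exact: implyP (R0E X) X_r.
- by rewrite -[X]setCK; apply/CE/(implyP (R0E _)).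
- by rewrite setCK.
Qed.

Lemma cl0E H : cl0 r H = cl0_explicit r H.
Proof.
apply/eqP; rewrite eqEsubset cl0_sub ?inK0_cl0_explicit ?sub_cl0_explicit //=.
apply/subsetP => X XH; rewrite inE; apply/forallP => E; apply/implyP => /andP[KE HE].
exact: subsetP (cl0_explicit_sub KE HE) X XH.
Qed.

Lemma cl_eq_cl0P H : cl r H = cl0 r H <-> R2 r (cl0 r H).
Proof.
split=> [<- | R2H]; first exact: R2_cl.
apply/eqP; rewrite eqEsubset cl0_sub_cl andbT cl_sub //.
  by rewrite /inK R2H andbT cl0E; apply: inK0_cl0_explicit.
by rewrite cl0E sub_cl0_explicit.
Qed.

Lemma orth_cond_of_R2 X Y : R2 r (cl0_explicit r [set X; Y]) -> orth_cond r X Y.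
Proof.
move=> /R2P R2XY.
have XE : X \in cl0_explicit r [set X; Y] by rewrite (subsetP (sub_cl0_explicit _ _)) ?set21.
have YE : Y \in cl0_explicit r [set X; Y] by rewrite (subsetP (sub_cl0_explicit _ _)) ?set22.
apply/orth_condE; split => [rXY | rCXY].
  exact/(setU_mem_cl0_explicit_pair rXY)/R2XY.
have rCXCY : r <= #|~: X :&: ~: Y| by rewrite -setCU.
have CXY : ~: X :|: ~: Y \in cl0_explicit r [set ~: X; ~: Y].
  by rewrite cl0_explicit_pairCC; apply: R2XY; rewrite ?cl0_explicitC.
by have := setU_mem_cl0_explicit_pair rCXCY CXY; rewrite -setCI setCK !setCS orbCA.
Qed.

Lemma R2_cl0_explicit_pairP A B :
  R2 r (cl0_explicit r [set A; B]) <-> orth_cond r A B /\ orth_cond r A (~: B).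
Proof.
split=> [R2AB | [oAB oACB]].
  by split; apply: orth_cond_of_R2; rewrite ?cl0_explicit_pairCr.
apply/R2P => X Y XE YE rXY; apply: (mem_cl0_explicit_setU XE YE).
have extreme (U V : {set 'I_n}) : (#|V| <= r) || (#|~: V| <= r) -> r <= #|U :&: V| ->
    [|| U \subset V, V \subset U | #|~: (U :|: V)| <= r].
  case/orP=> [V_r rUV | CV_r _]; first by rewrite (subset_of_card_setI V_r) ?orbT // setIC.
  by rewrite (leq_trans _ CV_r) ?orbT // subset_leq_card // setCS subsetUr.
have [/extreme-> // | Y_core] := boolP ((#|Y| <= r) || (#|~: Y| <= r)).
have [X_edge | X_core] := boolP ((#|X| <= r) || (#|~: X| <= r)).
  by rewrite setUC orbCA extreme // setIC.
have signed (Z : {set 'I_n}) : Z \in cl0_explicit r [set A; B] ->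
    ~~ ((#|Z| <= r) || (#|~: Z| <= r)) -> (Z \in [set A; B]) || (~: Z \in [set A; B]).
  by rewrite inE orbA => /orP[->|].
case: (orth_cond_signed oAB oACB (signed X XE X_core) (signed Y YE Y_core)).
- by move=> ->; rewrite subxx.
- by move=> ->; rewrite setUC setUCr setCT cards0 !orbT.
- by case/orth_condE => /(_ rXY).
Qed.

End Closures.

Theorem mainTheorem14 (n r : nat) (A B : {set 'I_n}) :
  r_orthogonal r A B <->
  ((#|A :&: B| < r \/ A \subset B \/ B \subset A \/ #|~: (A :|: B)| < r
     \/ (#|A :&: B| = r /\ #|~: (A :|: B)| = r))
   /\
   (#|A :\: B| < r \/ A :&: B = set0 \/ ~: (A :|: B) = set0 \/ #|B :\: A| < r
     \/ (#|A :\: B| = r /\ #|B :\: A| = r))).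
Proof.
apply: iff_trans (cl_eq_cl0P _ _) _; rewrite cl0E.
apply: iff_trans (R2_cl0_explicit_pairP _ _ _) _.
have disjAB : A \subset ~: B <-> A :&: B = set0.
  by rewrite -disjoints_subset -setI_eq0; split => /eqP.
have coverAB : ~: B \subset A <-> ~: (A :|: B) = set0.
  by rewrite -{1}[A]setCK -disjoints_subset -setI_eq0 -setCU setUC; split => /eqP.
have CACB : ~: (A :|: ~: B) = B :\: A by rewrite setCU setCK setDE setIC.
rewrite /orth_cond CACB -setDE.
tauto.
Qed.
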